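(* Let $U\subset V\subset\mathbb R^2$ be compact star-shaped domains (origin in the interior) with smooth boundaries, and assume $V$ is convex. Then $\mathrm{sys}(\mathbb T^2\times\partial U)\le\mathrm{sys}(\mathbb T^2\times\partial V)$.
   Context: $\mathbb T^2=\mathbb R^2/\mathbb Z^2$, $T^*\mathbb T^2=\mathbb T^2\times\mathbb R^2$, $\lambda_{\rm can}=p_1dq_1+p_2dq_2$. For a compact star-shaped domain $A\subset\mathbb R^2$ with smooth boundary, $\mathrm{sys}(\mathbb T^2\times\partial A)$ is the minimal action (period) of a closed Reeb orbit of the contact form $\lambda_{\rm can}|_{\mathbb T^2\times\partial A}$. *)

From Stdlib Require Import Reals ZArith.
From Coquelicot Require Import Coquelicot.
Open Scope R_scope.

Definition smooth (f : R -> R) : Prop := forall (n : nat) (x : R), ex_derive_n f n x.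

(** A (strictly) star-shaped compact domain in R^2 with smooth boundary is
    described by its radial function rho : smooth, positive, 2*PI-periodic. *)
Definition radial_function (rho : R -> R) : Prop :=
  smooth rho /\ (forall th, 0 < rho th) /\ (forall th, rho (th + 2 * PI) = rho th).

Definition star_domain (rho : R -> R) (x : R * R) : Prop :=
  exists r th, 0 <= r <= rho th /\ x = (r * cos th, r * sin th).

Definition bcurve (rho : R -> R) (th : R) : R * R :=
  (rho th * cos th, rho th * sin th).
Definition bcurve' (rho : R -> R) (th : R) : R * R :=
  (Derive rho th * cos th - rho th * sin th, Derive rho th * sin th + rho th * cos th).

Definition tangent_bd (rho : R -> R) (p w : R * R) : Prop :=
  exists th s, p = bcurve rho th /\ w = (s * fst (bcurve' rho th), s * snd (bcurve' rho th)).

Definition on_bd (rho : R -> R) (p : R * R) : Prop := exists th, p = bcurve rho th.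

Definition convex2 (A : R * R -> Prop) : Prop :=
  forall x y t, A x -> A y -> 0 <= t <= 1 ->
    A ((1 - t) * fst x + t * fst y, (1 - t) * snd x + t * snd y).

(** Canonical Liouville form lambda = p1 dq1 + p2 dq2 evaluated on a tangent
    vector (a, b) (a = dq-part, b = dp-part) at a point with momentum p. *)
Definition lambda_can (p a : R * R) : R := fst p * fst a + snd p * snd a.

Definition dlambda (a b a' b' : R * R) : R :=
  (fst b * fst a' - fst a * fst b') + (snd b * snd a' - snd a * snd b').

(** A curve t |-> (q(t), p(t)) in R^2 x R^2 (lift of T^2 x R^2 in q) that is a
    Reeb trajectory of lambda_can restricted to T^2 x dA_rho:
    it stays on the hypersurface, is differentiable, and its velocity v
    satisfies lambda(v) = 1 and d lambda(v, w) = 0 for all w tangent to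
    T^2 x dA_rho (which characterizes the Reeb vector field). *)
Definition reeb_trajectory (rho : R -> R) (q1 q2 p1 p2 : R -> R) : Prop :=
  forall t, on_bd rho (p1 t, p2 t) /\
    exists a1 a2 b1 b2 : R,
      is_derive q1 t a1 /\ is_derive q2 t a2 /\
      is_derive p1 t b1 /\ is_derive p2 t b2 /\
      lambda_can (p1 t, p2 t) (a1, a2) = 1 /\
      (forall (al w : R * R), tangent_bd rho (p1 t, p2 t) w ->
          dlambda (a1, a2) (b1, b2) al w = 0).

(** T is the period (= action) of a closed Reeb orbit on T^2 x dA_rho:
    the trajectory returns to its starting point in T^2 x R^2 at time T > 0
    (q is taken modulo Z^2). *)
Definition closed_reeb_period (rho : R -> R) (T : R) : Prop :=
  0 < T /\ exists (q1 q2 p1 p2 : R -> R) (k1 k2 : Z),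
    reeb_trajectory rho q1 q2 p1 p2 /\
    q1 T = q1 0 + IZR k1 /\ q2 T = q2 0 + IZR k2 /\
    p1 T = p1 0 /\ p2 T = p2 0.

Definition sys (rho : R -> R) : Rbar := Glb_Rbar (closed_reeb_period rho).

From Stdlib Require Import Reals Lra Lia ZArith.
From Coquelicot Require Import Coquelicot.
Open Scope R_scope.

(* Along a Reeb orbit of T^2 x dA the momentum p stays at a fixed point of dA, and q
   moves with constant velocity along the conormal of dA at p, normalised by
   <p, q'> = 1.  A closed orbit of action T is therefore a nonzero k in Z^2 conormal
   to dA at p with T = <k, p>; conversely, for every nonzero k the maximiser of
   <k, .> on dA carries such an orbit.  Given a closed orbit (k, p) on dV, the orbit
   of dU for the same k sits at a point x of U, and since V is convex the tangent
   line of dV at p supports V, whence <k, x> <= <k, p>. *)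

Definition dot (a b : R * R) : R := fst a * fst b + snd a * snd b.
Definition cross (a b : R * R) : R := fst a * snd b - snd a * fst b.

Lemma cos_eq_1_2PI_mult x : cos x = 1 -> exists m : Z, x = 2 * PI * IZR m.
Proof.
  intros Hx.
  assert (Hs : sin (x / 2) = 0).
  { assert (E : cos (2 * (x / 2)) = 1 - 2 * sin (x / 2) * sin (x / 2)) by apply cos_2a_sin.
    replace (2 * (x / 2)) with x in E by field. nra. }
  destruct (sin_eq_0_0 _ Hs) as [m Hm]. exists m. lra.
Qed.

Lemma periodic_2PI_Z (g : R -> R) : (forall x, g (x + 2 * PI) = g x) ->
  forall (m : Z) x, g (x + 2 * PI * IZR m) = g x.
Proof.
  intros Hg.
  assert (Hnat : forall (n : nat) x, g (x + 2 * PI * INR n) = g x).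
  { induction n as [|n IH]; intros x.
    - simpl. f_equal. ring.
    - rewrite <- (IH x), <- (Hg (x + 2 * PI * INR n)), S_INR. f_equal. ring. }
  intros m x. destruct (Z_le_gt_dec 0 m) as [Hm|Hm].
  - rewrite <- (Z2Nat.id m Hm), <- INR_IZR_INZ. apply Hnat.
  - rewrite <- (Hnat (Z.to_nat (- m)) (x + 2 * PI * IZR m)), INR_IZR_INZ, Z2Nat.id by lia.
    f_equal. rewrite opp_IZR. ring.
Qed.

Lemma reduce_2PI x : exists m : Z, 0 <= x - 2 * PI * IZR m < 2 * PI.
Proof.
  pose proof PI_RGT_0 as Hpi.
  destruct (archimed (x / (2 * PI))) as [H1 H2].
  exists (up (x / (2 * PI)) - 1)%Z. rewrite minus_IZR.
  set (u := IZR (up (x / (2 * PI)))) in *.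
  assert (E : x = x / (2 * PI) * (2 * PI)) by (field; lra).
  split; rewrite E at 1; nra.
Qed.

Lemma cos_plus_2PI x : cos (x + 2 * PI) = cos x.
Proof. rewrite cos_plus, cos_2PI, sin_2PI. ring. Qed.

Lemma sin_plus_2PI x : sin (x + 2 * PI) = sin x.
Proof. rewrite sin_plus, cos_2PI, sin_2PI. ring. Qed.

Lemma polar_radius_le (rho : R -> R) s phi : radial_function rho -> 0 < s ->
  star_domain rho (s * cos phi, s * sin phi) -> s <= rho phi.
Proof.
  intros [_ [_ Hper]] Hs [r [th [[Hr0 Hr] Heq]]].
  injection Heq as E1 E2.
  pose proof (sin2_cos2 phi) as C1. pose proof (sin2_cos2 th) as C2. unfold Rsqr in *.
  assert (Hrs : r = s).
  { assert (r * r = s * s).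
    { transitivity (r * r * (sin th * sin th + cos th * cos th)); [rewrite C2; ring|].
      transitivity (s * s * (sin phi * sin phi + cos phi * cos phi)); [|rewrite C1; ring].
      replace (r * r * (sin th * sin th + cos th * cos th))
        with ((r * cos th) * (r * cos th) + (r * sin th) * (r * sin th)) by ring.
      rewrite <- E1, <- E2. ring. }
    nra. }
  subst r.
  assert (Ec : cos phi = cos th) by (apply (Rmult_eq_reg_l s); lra).
  assert (Es : sin phi = sin th) by (apply (Rmult_eq_reg_l s); lra).
  destruct (cos_eq_1_2PI_mult (th - phi)) as [m Hm].
  { rewrite cos_minus, <- Ec, <- Es. lra. }
  replace th with (phi + 2 * PI * IZR m) in Hr by lra.
  rewrite (periodic_2PI_Z rho Hper) in Hr. exact Hr.
Qed.

Lemma Rdiv_pos_same_sign a b c : 0 < a * c -> 0 < b * c -> 0 < a / b.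
Proof.
  intros Ha Hb.
  assert (Hc : c <> 0) by (intros ->; lra).
  assert (Hb0 : b <> 0) by (intros ->; lra).
  replace (a / b) with (a * c * (b * c) / ((b * c) * (b * c))) by (field; auto).
  apply Rdiv_lt_0_compat; nra.
Qed.

Lemma Rmult_pos_of_div_pos a h c : 0 < a / h -> 0 < h * c -> 0 < a * c.
Proof.
  intros Ha Hh. assert (h <> 0) by (intros ->; lra).
  replace (a * c) with (a / h * (h * c)) by (field; auto). nra.
Qed.

Lemma Rdiv_lt_1_of_Rabs_lt a b : 0 < a * b -> Rabs a < Rabs b -> a / b < 1.
Proof.
  intros Hab Habs.
  assert (Hbb : 0 < b * b) by nra.
  assert (Hlt : a * b < b * b).
  { pose proof (Rabs_mult a b) as Mab. pose proof (Rsqr_abs b) as Mbb. unfold Rsqr in Mbb.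
    rewrite Rabs_pos_eq in Mab by lra. pose proof (Rabs_pos a). nra. }
  replace (a / b) with (a * b / (b * b)) by (field; intros ->; lra).
  apply (Rmult_lt_reg_r (b * b)); [exact Hbb|].
  unfold Rdiv. rewrite Rmult_assoc, Rinv_l by lra. lra.
Qed.

Lemma Rmult_pos_of_Rabs_sub_lt a c : Rabs (a - c) < Rabs c -> 0 < a * c.
Proof. unfold Rabs. destruct (Rcase_abs (a - c)), (Rcase_abs c); intros; nra. Qed.

Lemma exists_small_same_sign c delta : c <> 0 -> 0 < delta ->
  exists h, h <> 0 /\ Rabs h < delta /\ 0 < h * c.
Proof.
  intros Hc Hd. destruct (Rdichotomy _ _ Hc) as [Hneg|Hpos].
  - exists (- (delta / 2)). rewrite Rabs_Ropp, Rabs_pos_eq by lra. repeat split; nra.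
  - exists (delta / 2). rewrite Rabs_pos_eq by lra. repeat split; nra.
Qed.

Lemma is_derive_0_const (f : R -> R) : (forall t, is_derive f t 0) -> forall a b, f a = f b.
Proof.
  intros Hf.
  assert (pr : derivable f) by (intros x; exists 0; apply is_derive_Reals, Hf).
  apply (null_derivative_1 f pr). intros x. apply derive_pt_eq_0, is_derive_Reals, Hf.
Qed.

Lemma is_derive_continuous_near (g : R -> R) x l : is_derive g x l ->
  forall eta, 0 < eta -> exists delta, 0 < delta /\
    forall h, Rabs h < delta -> Rabs (g (x + h) - g x) < eta.
Proof.
  intros Hd eta Heta.
  assert (Hc : continuity_pt g x)
    by (apply derivable_continuous_pt; exists l; apply is_derive_Reals, Hd).
  destruct (Hc eta Heta) as [delta [Hdelta Hnear]].
  exists delta. split; [exact Hdelta|]. intros h Hh.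
  destruct (Req_dec h 0) as [->|Hh0].
  - rewrite Rplus_0_r, Rminus_diag, Rabs_R0. exact Heta.
  - apply (Hnear (x + h)). split.
    + split; [exact I|]. lra.
    + simpl. unfold R_dist. replace (x + h - x) with h by ring. exact Hh.
Qed.

Lemma is_derive_pos_near (g : R -> R) x l : is_derive g x l -> 0 < l ->
  exists delta, 0 < delta /\
    forall h, h <> 0 -> Rabs h < delta -> 0 < (g (x + h) - g x) / h.
Proof.
  intros Hd Hl. apply is_derive_Reals in Hd.
  destruct (Hd l Hl) as [delta Hnear]. exists delta. split; [apply cond_pos|].
  intros h Hh0 Hh. specialize (Hnear h Hh0 Hh). apply Rabs_def2 in Hnear. lra.
Qed.

Lemma exists_near_same_sign (H G E : R -> R) x c lH lG lE :
  is_derive H x lH -> 0 < lH -> H x = 0 ->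
  is_derive G x lG -> 0 < lG -> G x = 0 ->
  is_derive E x lE -> E x = c -> c <> 0 ->
  exists y, 0 < H y * c /\ 0 < G y * c /\ 0 < E y * c /\ Rabs (G y) < Rabs c.
Proof.
  intros DH HlH H0 DG HlG G0 DE Ec Hc.
  assert (Hac : 0 < Rabs c) by (apply Rabs_pos_lt, Hc).
  destruct (is_derive_pos_near H x lH DH HlH) as [dH [HdH HHnear]].
  destruct (is_derive_pos_near G x lG DG HlG) as [dG [HdG HGnear]].
  destruct (is_derive_continuous_near E x lE DE _ Hac) as [dE [HdE HEnear]].
  destruct (is_derive_continuous_near G x lG DG _ Hac) as [dG' [HdG' HGnear']].
  destruct (exists_small_same_sign c (Rmin (Rmin dH dG) (Rmin dE dG')) Hc)
    as [h [Hh0 [Hh Hhc]]]; [repeat apply Rmin_pos; assumption|].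
  apply Rmin_Rgt_l in Hh as [Hh1 Hh2].
  apply Rmin_Rgt_l in Hh1 as [HhH HhG]. apply Rmin_Rgt_l in Hh2 as [HhE HhG'].
  exists (x + h). split; [|split; [|split]].
  - apply (Rmult_pos_of_div_pos _ h); [|exact Hhc].
    replace (H (x + h)) with (H (x + h) - H x) by (rewrite H0; ring). now apply HHnear.
  - apply (Rmult_pos_of_div_pos _ h); [|exact Hhc].
    replace (G (x + h)) with (G (x + h) - G x) by (rewrite G0; ring). now apply HGnear.
  - apply Rmult_pos_of_Rabs_sub_lt.
    replace (E (x + h) - c) with (E (x + h) - E x) by (rewrite Ec; ring). now apply HEnear.
  - replace (G (x + h)) with (G (x + h) - G x) by (rewrite G0; ring). now apply HGnear'.
Qed.

Lemma periodic_continuous_max (g : R -> R) :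
  (forall x, continuity_pt g x) -> (forall x, g (x + 2 * PI) = g x) ->
  exists M, forall x, g x <= g M.
Proof.
  intros Hc Hper. pose proof PI_RGT_0.
  destruct (continuity_ab_maj g 0 (2 * PI) ltac:(lra) (fun c _ => Hc c)) as [M [HM _]].
  exists M. intros x. destruct (reduce_2PI x) as [m Hm].
  replace x with (x - 2 * PI * IZR m + 2 * PI * IZR m) by ring.
  rewrite (periodic_2PI_Z g Hper). apply HM. lra.
Qed.

Lemma is_derive_dot_const (q1 q2 : R -> R) c t a1 a2 :
  is_derive q1 t a1 -> is_derive q2 t a2 ->
  is_derive (fun t => dot (q1 t, q2 t) c) t (dot (a1, a2) c).
Proof.
  intros D1 D2. unfold dot; simpl.
  apply (is_derive_plus (fun t => q1 t * fst c) (fun t => q2 t * snd c));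
    apply (is_derive_scal_l (K := R_AbsRing) (V := R_NormedModule)); assumption.
Qed.

Lemma is_derive_dot_bcurve (rho : R -> R) k th : smooth rho ->
  is_derive (fun th => dot k (bcurve rho th)) th (dot k (bcurve' rho th)).
Proof.
  intros Hsm. unfold dot, bcurve, bcurve'; simpl. auto_derive.
  - repeat split; apply (Hsm 1%nat).
  - change (Derive (fun x => rho x) th) with (Derive rho th). ring.
Qed.

Lemma dot_conormal k tau v : dot k tau = 0 ->
  dot tau tau * dot k v = cross tau v * cross tau k.
Proof.
  intros Hk. transitivity (dot tau v * dot k tau + cross tau v * cross tau k).
  - unfold dot, cross. ring.
  - rewrite Hk. ring.
Qed.

Lemma cross_bcurve'_bcurve (rho : R -> R) th :
  cross (bcurve' rho th) (bcurve rho th) = - (rho th * rho th).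
Proof.
  unfold cross, bcurve, bcurve'; simpl. pose proof (sin2_cos2 th) as C. unfold Rsqr in C.
  transitivity (- (rho th * rho th) * (sin th * sin th + cos th * cos th)); [ring|].
  rewrite C. ring.
Qed.

Lemma dot_bcurve'_bcurve' (rho : R -> R) th :
  dot (bcurve' rho th) (bcurve' rho th) = Derive rho th ^ 2 + rho th ^ 2.
Proof.
  unfold dot, bcurve'; simpl. pose proof (sin2_cos2 th) as C. unfold Rsqr in C.
  transitivity ((Derive rho th ^ 2 + rho th ^ 2) * (sin th * sin th + cos th * cos th)); [ring|].
  rewrite C. ring.
Qed.

Lemma exists_dot_unit_pos k : k <> (0, 0) -> exists th, 0 < dot k (cos th, sin th).
Proof.
  destruct k as [k1 k2]. intros Hk. unfold dot; simpl.
  destruct (Rtotal_order k1 0) as [H1|[H1|H1]].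
  - exists PI. rewrite cos_PI, sin_PI. lra.
  - subst k1. destruct (Rtotal_order k2 0) as [H2|[H2|H2]].
    + exists (- (PI / 2)). rewrite cos_neg, sin_neg, cos_PI2, sin_PI2. lra.
    + subst. easy.
    + exists (PI / 2). rewrite cos_PI2, sin_PI2. lra.
  - exists 0. rewrite cos_0, sin_0. lra.
Qed.

Lemma reeb_trajectory_velocity (rho q1 q2 p1 p2 : R -> R) :
  reeb_trajectory rho q1 q2 p1 p2 -> forall t,
  on_bd rho (p1 t, p2 t) /\ is_derive p1 t 0 /\ is_derive p2 t 0 /\
  exists a1 a2, is_derive q1 t a1 /\ is_derive q2 t a2 /\
    dot (p1 t, p2 t) (a1, a2) = 1 /\
    forall th, bcurve rho th = (p1 t, p2 t) -> dot (a1, a2) (bcurve' rho th) = 0.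
Proof.
  intros Htr t.
  destruct (Htr t) as [[th Hth] [a1 [a2 [b1 [b2 [D1 [D2 [D3 [D4 [L W]]]]]]]]]].
  assert (Hzero : tangent_bd rho (p1 t, p2 t) (0, 0)).
  { exists th, 0. split; [exact Hth|]. f_equal; ring. }
  pose proof (W (1, 0) (0, 0) Hzero) as W1. pose proof (W (0, 1) (0, 0) Hzero) as W2.
  unfold dlambda in W1, W2; simpl in W1, W2.
  replace b1 with 0 in D3 by lra. replace b2 with 0 in D4 by lra.
  split; [exists th; exact Hth|]. do 2 (split; [assumption|]).
  exists a1, a2. do 3 (split; [assumption|]).
  intros th' Hth'.
  assert (Htan : tangent_bd rho (p1 t, p2 t) (bcurve' rho th')).
  { exists th', 1. split; [now rewrite Hth'|]. destruct (bcurve' rho th'); simpl; f_equal; ring. }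
  pose proof (W (0, 0) _ Htan) as W3. unfold dlambda, dot in *; simpl in *. lra.
Qed.

Lemma closed_reeb_period_conormal (rho : R -> R) T : closed_reeb_period rho T ->
  exists th0 (k1 k2 : Z),
    dot (IZR k1, IZR k2) (bcurve' rho th0) = 0 /\ dot (IZR k1, IZR k2) (bcurve rho th0) = T.
Proof.
  intros [_ [q1 [q2 [p1 [p2 [k1 [k2 [Htr [Eq1 [Eq2 _]]]]]]]]]].
  pose proof (reeb_trajectory_velocity _ _ _ _ _ Htr) as Hv.
  assert (Hp : forall t, (p1 t, p2 t) = (p1 0, p2 0)).
  { intros t. f_equal; apply is_derive_0_const; intros s; apply Hv. }
  destruct (proj1 (Hv 0)) as [th0 Hth0].
  set (tau := bcurve' rho th0). set (p := (p1 0, p2 0)) in *.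
  assert (Hq : forall t, exists a1 a2, is_derive q1 t a1 /\ is_derive q2 t a2 /\
                 dot p (a1, a2) = 1 /\ dot (a1, a2) tau = 0).
  { intros t. destruct (Hv t) as [_ [_ [_ [a1 [a2 [D1 [D2 [L W]]]]]]]].
    rewrite Hp in L, W. exists a1, a2.
    do 3 (split; [assumption|]). apply W. now rewrite Hth0. }
  assert (Htau : forall t, is_derive (fun t => dot (q1 t, q2 t) tau) t 0).
  { intros t. destruct (Hq t) as [a1 [a2 [D1 [D2 [_ W]]]]].
    rewrite <- W. now apply is_derive_dot_const. }
  assert (Hact : forall t, is_derive (fun t => dot (q1 t, q2 t) p - t) t 0).
  { intros t. destruct (Hq t) as [a1 [a2 [D1 [D2 [L _]]]]].
    replace 0 with (dot (a1, a2) p - 1) by (unfold dot in *; lra).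
    apply (is_derive_minus (fun t => dot (q1 t, q2 t) p) (fun t => t)).
    - now apply is_derive_dot_const.
    - apply (is_derive_id (K := R_AbsRing)). }
  pose proof (is_derive_0_const _ Htau T 0) as GT.
  pose proof (is_derive_0_const _ Hact T 0) as GA.
  exists th0, k1, k2. rewrite <- Hth0. fold tau. unfold dot in *; simpl in *.
  rewrite Eq1, Eq2 in GT, GA. split; lra.
Qed.

Lemma closed_reeb_period_of_conormal (rho : R -> R) M (k1 k2 : Z) :
  (forall th, bcurve rho th = bcurve rho M -> dot (IZR k1, IZR k2) (bcurve' rho th) = 0) ->
  0 < dot (IZR k1, IZR k2) (bcurve rho M) ->
  closed_reeb_period rho (dot (IZR k1, IZR k2) (bcurve rho M)).
Proof.
  set (k := (IZR k1, IZR k2)). set (p := bcurve rho M). set (T := dot k p).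
  intros Hcrit HT. assert (HT0 : T <> 0) by lra. split; [exact HT|].
  exists (fun t => t * IZR k1 / T), (fun t => t * IZR k2 / T),
    (fun _ => fst p), (fun _ => snd p), k1, k2.
  split; [|split; [|split; [|split]]]; try reflexivity; try (field; exact HT0).
  intros t. split; [exists M; symmetry; apply surjective_pairing|].
  exists (IZR k1 / T), (IZR k2 / T), 0, 0.
  split; [auto_derive; [exact I|field; exact HT0]|].
  split; [auto_derive; [exact I|field; exact HT0]|].
  split; [auto_derive; [exact I|ring]|].
  split; [auto_derive; [exact I|ring]|].
  split.
  - unfold lambda_can; simpl. transitivity (T / T); [|field; exact HT0].
    change (fst p * (IZR k1 / T) + snd p * (IZR k2 / T) = dot k p / T).
    unfold dot, k; simpl. field. exact HT0.
  - intros al w [th [s [Hth ->]]].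
    assert (Hk : dot k (bcurve' rho th) = 0) by (apply Hcrit; rewrite <- Hth; now destruct p).
    set (tau := bcurve' rho th) in *. unfold dlambda; simpl.
    transitivity (- (s / T) * dot k tau); [unfold dot, k; simpl; field; exact HT0|].
    rewrite Hk. ring.
Qed.

(* Every parameter of the maximising boundary point is itself a maximiser, hence
   critical, as closed_reeb_period_of_conormal requires. *)
Lemma closed_reeb_period_max (rho : R -> R) (k1 k2 : Z) : radial_function rho ->
  (IZR k1, IZR k2) <> (0, 0) ->
  exists M, closed_reeb_period rho (dot (IZR k1, IZR k2) (bcurve rho M)).
Proof.
  intros [Hsm [Hpos Hper]] Hk. set (k := (IZR k1, IZR k2)) in *.
  set (f := fun th => dot k (bcurve rho th)).
  assert (Df : forall th, is_derive f th (dot k (bcurve' rho th)))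
    by (intros; now apply is_derive_dot_bcurve).
  destruct (periodic_continuous_max f) as [M HM].
  - intros x. apply derivable_continuous_pt. eexists. apply is_derive_Reals, Df.
  - intros x. unfold f, bcurve. now rewrite Hper, cos_plus_2PI, sin_plus_2PI.
  - exists M. apply closed_reeb_period_of_conormal.
    + intros th Hth. change (dot k (bcurve' rho th) = 0).
      assert (pr : derivable_pt f th) by (eexists; apply is_derive_Reals, Df).
      rewrite <- (derive_pt_eq_0 f th _ pr (proj1 (is_derive_Reals _ _ _) (Df th))).
      apply (deriv_maximum f (th - 1) (th + 1) th pr); try lra.
      intros x _ _. unfold f at 2. rewrite Hth. apply HM.
    + change (0 < f M). destruct (exists_dot_unit_pos k Hk) as [th Hth].
      apply Rlt_le_trans with (f th); [|apply HM].
      unfold f, dot, bcurve in *; simpl in *. specialize (Hpos th). nra.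
Qed.

Lemma star_domain_beyond_tangent_radial (rho : R -> R) th0 d : radial_function rho ->
  cross (cos th0, sin th0) d = 0 -> cross (bcurve' rho th0) d < 0 ->
  ~ star_domain rho (fst (bcurve rho th0) + fst d, snd (bcurve rho th0) + snd d).
Proof.
  intros Hr HD Hout Hx. pose proof Hr as [_ [Hpos _]].
  destruct d as [d1 d2]. unfold cross, bcurve, bcurve' in *; simpl in *.
  pose proof (sin2_cos2 th0) as C. unfold Rsqr in C.
  set (e := cos th0 * d1 + sin th0 * d2).
  assert (E1 : d1 = e * cos th0).
  { transitivity (d1 * (sin th0 * sin th0 + cos th0 * cos th0)); [rewrite C; ring|].
    transitivity (e * cos th0 - sin th0 * (cos th0 * d2 - sin th0 * d1)); [unfold e; ring|].
    rewrite HD. ring. }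
  assert (E2 : d2 = e * sin th0).
  { transitivity (d2 * (sin th0 * sin th0 + cos th0 * cos th0)); [rewrite C; ring|].
    transitivity (e * sin th0 + cos th0 * (cos th0 * d2 - sin th0 * d1)); [unfold e; ring|].
    rewrite HD. ring. }
  assert (He : 0 < e).
  { assert (- (e * rho th0) < 0).
    { replace (- (e * rho th0)) with (- (e * rho th0) * (sin th0 * sin th0 + cos th0 * cos th0))
        by (rewrite C; ring).
      rewrite E1, E2 in Hout. eapply Rle_lt_trans; [|exact Hout]. right. ring. }
    specialize (Hpos th0). nra. }
  assert (Hle : rho th0 + e <= rho th0).
  { apply (polar_radius_le rho _ th0 Hr); [specialize (Hpos th0); lra|].
    replace ((rho th0 + e) * cos th0, (rho th0 + e) * sin th0)
      with (rho th0 * cos th0 + d1, rho th0 * sin th0 + d2) by (rewrite E1, E2; f_equal; ring).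
    exact Hx. }
  lra.
Qed.

(* Cramer's rule for the intersection of the segment [P, P + d], P = r0 u(th0),
   with the ray of direction u(phi). *)
Lemma segment_ray_intersection r0 th0 phi d1 d2 :
  cross (cos phi, sin phi) (d1, d2) <> 0 ->
  let t := r0 * sin (phi - th0) / cross (cos phi, sin phi) (d1, d2) in
  let s := r0 * cross (cos th0, sin th0) (d1, d2) / cross (cos phi, sin phi) (d1, d2) in
  (s * cos phi, s * sin phi) =
  ((1 - t) * (r0 * cos th0) + t * (r0 * cos th0 + d1),
   (1 - t) * (r0 * sin th0) + t * (r0 * sin th0 + d2)).
Proof.
  intros HE t s. unfold t, s, cross in *; simpl in *. rewrite sin_minus.
  f_equal; field; exact HE.
Qed.

(* Turning the angle from th0 towards the side of d, the ray of angle phi meets the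
   segment [c(th0), c(th0) + d] at a radius s > rho phi, contradicting convexity. *)
Lemma star_domain_beyond_tangent_transversal (rho : R -> R) th0 d :
  radial_function rho -> convex2 (star_domain rho) ->
  cross (cos th0, sin th0) d <> 0 -> cross (bcurve' rho th0) d < 0 ->
  ~ star_domain rho (fst (bcurve rho th0) + fst d, snd (bcurve rho th0) + snd d).
Proof.
  intros Hr Hconv HD Hout Hx. pose proof Hr as [Hsm [Hpos _]].
  destruct d as [d1 d2].
  set (r0 := rho th0). assert (Hr0 : 0 < r0) by apply Hpos.
  set (D := cross (cos th0, sin th0) (d1, d2)) in *.
  set (E := fun phi => cross (cos phi, sin phi) (d1, d2)).
  set (t := fun phi => r0 * sin (phi - th0) / E phi).
  set (H := fun phi => r0 * D - rho phi * E phi).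
  set (G := fun phi => D * t phi).
  assert (DH : is_derive H th0 (- cross (bcurve' rho th0) (d1, d2))).
  { unfold H, E, D, cross; simpl. auto_derive; [apply (Hsm 1%nat)|].
    change (Derive (fun x => rho x) th0) with (Derive rho th0). ring. }
  assert (DE : is_derive E th0 (- (cos th0 * d1 + sin th0 * d2))).
  { unfold E, cross; simpl. auto_derive; [exact I|ring]. }
  assert (DG : is_derive G th0 r0).
  { unfold G, t, E, D, cross; simpl. auto_derive.
    - intros Z. apply HD. unfold D, cross; simpl. lra.
    - replace (th0 + - th0) with 0 by ring. rewrite sin_0, cos_0. field.
      intros Z. apply HD. unfold D, cross; simpl. lra. }
  assert (H0 : H th0 = 0) by (unfold H, E; fold D r0; ring).
  assert (G0 : G th0 = 0) by (unfold G, t; rewrite Rminus_diag, sin_0; unfold Rdiv; ring).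
  destruct (exists_near_same_sign H G E th0 D _ _ _ DH ltac:(lra) H0 DG Hr0 G0 DE eq_refl HD)
    as [phi [HHD [HGD [HED HGabs]]]].
  assert (HDD : 0 < D * D) by (apply Rsqr_pos_lt, HD).
  assert (HE0 : E phi <> 0) by (intros E0; rewrite E0 in HED; lra).
  set (s := r0 * D / E phi).
  assert (Ht : 0 <= t phi <= 1).
  { replace (t phi) with (G phi / D) by (unfold G; field; exact HD).
    split; [apply Rlt_le, (Rdiv_pos_same_sign _ _ D); assumption|].
    apply Rlt_le, Rdiv_lt_1_of_Rabs_lt; assumption. }
  assert (Hs : 0 < s).
  { apply (Rdiv_pos_same_sign _ _ D); [|exact HED].
    rewrite Rmult_assoc. now apply Rmult_lt_0_compat. }
  assert (Hbeyond : 0 < s - rho phi).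
  { replace (s - rho phi) with (H phi / E phi) by (unfold s, H; field; exact HE0).
    now apply (Rdiv_pos_same_sign _ _ D). }
  assert (HP : star_domain rho (bcurve rho th0)).
  { exists r0, th0. split; [split; [lra|apply Rle_refl]|reflexivity]. }
  pose proof (Hconv _ _ (t phi) HP Hx Ht) as Hseg.
  match type of Hseg with star_domain _ ?pt =>
    replace pt with (s * cos phi, s * sin phi) in Hseg
      by exact (segment_ray_intersection r0 th0 phi d1 d2 HE0) end.
  pose proof (polar_radius_le rho s phi Hr Hs Hseg). lra.
Qed.

Lemma convex_star_domain_beyond_tangent (rho : R -> R) th0 x :
  radial_function rho -> convex2 (star_domain rho) ->
  cross (bcurve' rho th0) (fst x - fst (bcurve rho th0), snd x - snd (bcurve rho th0)) < 0 ->
  ~ star_domain rho x.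
Proof.
  intros Hr Hconv Hout.
  set (d := (fst x - fst (bcurve rho th0), snd x - snd (bcurve rho th0))) in *.
  replace x with (fst (bcurve rho th0) + fst d, snd (bcurve rho th0) + snd d)
    by (destruct x; simpl; f_equal; ring).
  destruct (Req_dec (cross (cos th0, sin th0) d) 0) as [HD|HD].
  - now apply star_domain_beyond_tangent_radial.
  - now apply star_domain_beyond_tangent_transversal.
Qed.

Lemma convex_star_domain_support (rho : R -> R) th0 k x :
  radial_function rho -> convex2 (star_domain rho) ->
  dot k (bcurve' rho th0) = 0 -> 0 < dot k (bcurve rho th0) ->
  star_domain rho x -> dot k x <= dot k (bcurve rho th0).
Proof.
  intros Hr Hconv Hk Hout Hx. pose proof Hr as [_ [Hpos _]].
  apply Rnot_lt_le. intros Hlt.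
  apply (convex_star_domain_beyond_tangent rho th0 x Hr Hconv); [|exact Hx].
  set (tau := bcurve' rho th0). set (P := bcurve rho th0) in *.
  set (d := (fst x - fst P, snd x - snd P)).
  assert (Htau : 0 < dot tau tau).
  { unfold tau. rewrite dot_bcurve'_bcurve'. specialize (Hpos th0). nra. }
  assert (HP := dot_conormal k tau P Hk).
  rewrite (cross_bcurve'_bcurve rho th0 : cross tau P = _) in HP.
  assert (Hd := dot_conormal k tau d Hk).
  assert (Hkd : dot k d = dot k x - dot k P) by (unfold d, dot; simpl; ring).
  specialize (Hpos th0).
  assert (Hcross_k : cross tau k < 0) by nra.
  nra.
Qed.

Theorem propositionA1 (rhoU rhoV : R -> R) :
  radial_function rhoU -> radial_function rhoV ->
  (forall x, star_domain rhoU x -> star_domain rhoV x) ->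
  convex2 (star_domain rhoV) ->
  Rbar_le (sys rhoU) (sys rhoV).
Proof.
  intros HU HV Hsub Hconv.
  destruct (Glb_Rbar_correct (closed_reeb_period rhoU)) as [HlbU _].
  destruct (Glb_Rbar_correct (closed_reeb_period rhoV)) as [_ HglbV].
  apply HglbV. intros T HT.
  destruct (closed_reeb_period_conormal rhoV T HT) as [th0 [k1 [k2 [Hk HkT]]]].
  assert (HT0 : 0 < T) by apply HT.
  assert (Hk0 : (IZR k1, IZR k2) <> (0, 0)).
  { intros E. rewrite E in HkT. unfold dot in HkT; simpl in HkT. lra. }
  destruct (closed_reeb_period_max rhoU k1 k2 HU Hk0) as [M HM].
  apply Rbar_le_trans with (dot (IZR k1, IZR k2) (bcurve rhoU M)); [now apply HlbU|].
  simpl. rewrite <- HkT. apply (convex_star_domain_support rhoV); try assumption; [lra|].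
  apply Hsub. exists (rhoU M), M. split; [|reflexivity].
  destruct HU as [_ [Hpos _]]. specialize (Hpos M). lra.
Qed.
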